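(* Assume the setting below. Let $[q]\in R$. If $\nu(q)$ cannot be written as $\boldsymbol w\otimes\mathbf x$ with $\boldsymbol w\in\mathbb W$ and $\mathbf x\in\mathrm{Im}\mathbb H$, then the action of $T^k$ on $\mathbb{HP}^{k-1}$ is locally free at $[q]$ (i.e. the stabilizer of $[q]$ is finite). Furthermore, the action of $G_{\mathcal S}$ on $R$ is locally free.
   Context: $F$ is a 2-torus, Lie algebra $\mathfrak f\cong\mathbb{R}^2$, lattice $\Lambda\cong\mathbb{Z}^2$. $\mathcal{S}=\{u_1,\dots,u_k\}\subset\Lambda$ is an ordered set generating $\Lambda$, with cyclically consecutive elements linearly independent, each $u_i$ either $(p,0)$ with $p>0$ or with positive second coordinate, $u_1=(p,0)$, and convex ($u_1,\dots,u_k$ outward normals of a convex polygon). Set $v_1=u_1+u_k$, $v_i=u_i-u_{i-1}$ ($2\le i\le k$), $\Omega:\mathbb{R}^k\to\mathfrak f$, $e_i\mapsto v_i$, $\mathfrak g=\ker\Omega$. Conformal data: $\zeta_1,\dots,\zeta_k$ with $|\zeta_i|=1$, $0=\arg\zeta_1<\dots<\arg\zeta_k<2\pi$; $z_i=\zeta_i^{1/2}$, $0\le\arg z_i<\pi$; $\mathbb W=\mathrm{span}\{\mathrm{Re}\boldsymbol z,\mathrm{Im}\boldsymbol z\}\subset(\mathbb R^k)^*$ where $\boldsymbol z=(z_1,\dots,z_k)$; $B^*:(\mathbb R^k)^*\to\mathfrak g^*$ linear with kernel $\mathbb W$. $\mathbb H^k$ has coordinates $q_m=x_m+y_mj$; $\mathcal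 U=\mathbb H^k/\{\pm1\}$; $T^k$ is the diagonal torus $\{(\lambda_1,\dots,\lambda_k):\lambda_m\in U(1)\subset\mathbb C\}$ acting by $q_m\mapsto q_m\lambda_m$, modulo $(-1,\dots,-1)$, acting on $\mathcal U$ and on $\mathbb{HP}^{k-1}$ by $[q_1:\dots:q_k]\mapsto[q_1\lambda_1:\dots:q_k\lambda_k]$; its Lie algebra is $\mathbb R^k$, and $G_{\mathcal S}\subset T^k$ is the $(k-2)$-dimensional subtorus with Lie algebra $\mathfrak g$. $\nu_m(q)=(|x_m|^2-|y_m|^2,\mathrm{Re}(2ix_my_m),\mathrm{Im}(2ix_my_m))\in\mathrm{Im}\mathbb H$, $\nu=(\nu_1,\dots,\nu_k)$ viewed in $(\mathbb R^k)^*\otimes\mathrm{Im}\mathbb H$, $\mu_{\mathcal R}=B^*\circ\nu$, $P=\mu_{\mathcal R}^{-1}(0)\setminus\{0\}\subset\mathcal U$, and $R=\{[q]\in\mathbb{HP}^{k-1}:q\in P\}$. *)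

From HB Require Import structures.
From mathcomp Require Import all_boot all_order all_algebra.
From mathcomp Require Import all_classical all_reals.
From mathcomp Require Import trigo.
From mathcomp Require Import complex.

Set Implicit Arguments.
Unset Strict Implicit.
Unset Printing Implicit Defensive.

Import Order.TTheory GRing.Theory Num.Theory.
Local Open Scope ring_scope.

(* Index i : 'I_k, with 0 playing the role of the paper's index 1.     *)

Definition det2 (a b : int * int) : int := a.1 * b.2 - a.2 * b.1.

Definition admissible_S (k : nat) (u : 'I_k -> int * int) : Prop :=
  (forall w : int * int, exists c : 'I_k -> int,
      w = (\sum_(i < k) c i * (u i).1, \sum_(i < k) c i * (u i).2))
  /\ (forall i : 'I_k, det2 (u i) (u (ordS i)) != 0)
  /\ (forall i : 'I_k, ((u i).2 = 0 /\ 0 < (u i).1) \/ 0 < (u i).2)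
  /\ (forall i : 'I_k, val i = 0%N -> (u i).2 = 0 /\ 0 < (u i).1)
  /\ (forall i : 'I_k, ((val i).+1 < k)%N -> 0 < det2 (u i) (u (ordS i))).

Definition vS (k : nat) (u : 'I_k -> int * int) (i : 'I_k) : int * int :=
  if val i == 0%N then ((u i).1 + (u (ord_pred i)).1, (u i).2 + (u (ord_pred i)).2)
  else ((u i).1 - (u (ord_pred i)).1, (u i).2 - (u (ord_pred i)).2).

(* Omega : R^k -> f = R^2, e_i |-> v_i, as a (k x 2) matrix acting on rows *)
Definition Omega (R : realType) (k : nat) (u : 'I_k -> int * int) : 'M[R]_(k, 2) :=
  \matrix_(i < k, a < 2)
    (if val a == 0%N then ((vS u i).1)%:~R else ((vS u i).2)%:~R).

Definition in_g (R : realType) (k : nat) (u : 'I_k -> int * int) (t : 'rV[R]_k) : Prop :=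
  t *m Omega R u = 0.

(* Conformal data: arg zeta_i = th_i, 0 = th_1 < ... < th_k < 2 pi.    *)

Definition conformal_data (R : realType) (k : nat) (th : 'I_k -> R) : Prop :=
  (forall i : 'I_k, 0 <= th i < 2 * pi)
  /\ (forall i : 'I_k, val i = 0%N -> th i = 0)
  /\ (forall i : 'I_k, ((val i).+1 < k)%N -> th i < th (ordS i)).

Definition expc (R : realType) (s : R) : R[i] := Complex (cos s) (sin s).

(* zeta_i = e^{i th_i};  z_i = zeta_i^{1/2} with 0 <= arg z_i < pi, i.e. e^{i th_i/2} *)
Definition zeta (R : realType) (k : nat) (th : 'I_k -> R) (i : 'I_k) : R[i] := expc (th i).
Definition zS (R : realType) (k : nat) (th : 'I_k -> R) (i : 'I_k) : R[i] := expc (th i / 2).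

Definition inW (R : realType) (k : nat) (th : 'I_k -> R) (w : 'rV[R]_k) : Prop :=
  exists a b : R, w = a *: (\row_i complex.Re (zS th i)) + b *: (\row_i complex.Im (zS th i)).

(* Quaternions x + y j with x, y complex.                              *)

Definition quat (R : Type) := (R[i] * R[i])%type.

Definition qmul (R : realType) (p q : quat R) : quat R :=
  (p.1 * q.1 - p.2 * conjc q.2, p.1 * q.2 + p.2 * conjc q.1).

Definition qzero (R : realType) : quat R := (0, 0).

Definition qvec_nonzero (R : realType) (k : nat) (q : 'I_k -> quat R) : Prop :=
  exists m : 'I_k, q m != qzero R.

(* [q] = [q'] in HP^{k-1} = (H^k \ 0) / H^*  (left scalar multiplication) *)
Definition hp_eq (R : realType) (k : nat) (q q' : 'I_k -> quat R) : Prop :=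
  exists h : quat R, h != qzero R /\ forall m : 'I_k, q' m = qmul h (q m).

Definition csq (R : realType) (x : R[i]) : R := complex.Re x ^+ 2 + complex.Im x ^+ 2.

(* nu(q) in (R^k)^* (x) Im H, as a (k x 3) matrix: row m is nu_m(q) *)
Definition nu (R : realType) (k : nat) (q : 'I_k -> quat R) : 'M[R]_(k, 3) :=
  \matrix_(m < k, a < 3)
    (let x := (q m).1 in let y := (q m).2 in
     let w := (Complex 0 2) * x * y in
     [:: csq x - csq y; complex.Re w; complex.Im w]`_a).

(* mu_R = B^* o nu, where B^* : (R^k)^* -> g^* ~ R^(k-2) is w |-> w *m B *)
Definition muR (R : realType) (k : nat) (B : 'M[R]_(k, k - 2)) (q : 'I_k -> quat R)
  : 'M[R]_(3, k - 2) := (nu q)^T *m B.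

Definition inP (R : realType) (k : nat) (B : 'M[R]_(k, k - 2)) (q : 'I_k -> quat R) : Prop :=
  qvec_nonzero q /\ muR B q = 0.

Definition inRset (R : realType) (k : nat) (B : 'M[R]_(k, k - 2)) (q : 'I_k -> quat R) : Prop :=
  qvec_nonzero q /\ exists q', inP B q' /\ hp_eq q' q.

(* T^k = U(1)^k (the quotient by (-1,...,-1) acts trivially on HP^{k-1}) *)
Definition inTk (R : realType) (k : nat) (lam : 'I_k -> R[i]) : Prop :=
  forall m : 'I_k, csq (lam m) = 1.

Definition tact (R : realType) (k : nat) (lam : 'I_k -> R[i]) (q : 'I_k -> quat R)
  : 'I_k -> quat R := fun m => qmul (q m) (lam m, 0).

Definition inGS (R : realType) (k : nat) (u : 'I_k -> int * int) (lam : 'I_k -> R[i]) : Prop :=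
  exists t : 'rV[R]_k, in_g u t /\ forall m : 'I_k, lam m = expc (t 0 m).

Definition stabT (R : realType) (k : nat) (q : 'I_k -> quat R) : set ('I_k -> R[i]) :=
  [set lam | inTk lam /\ hp_eq q (tact lam q)].

Definition stabGS (R : realType) (k : nat) (u : 'I_k -> int * int) (q : 'I_k -> quat R)
  : set ('I_k -> R[i]) :=
  [set lam | inGS u lam /\ hp_eq q (tact lam q)].

(* Since mu_R(q) = 0 and left multiplication acts on nu by rotations, each column of nu(q)
   lies in W = ker B^*: nu_m(q) = A cos(th_m/2) + B sin(th_m/2) with A, B in Im H.  If
   q_m l_m = h q_m, then Im(l_m) nu_m(q) = |q_m|^2 Im h for all m.  When A and B are
   independent, comparing th = 0 with some 0 < th < 2 pi forces Im l = 0, so l = +-1 and the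
   stabilizer in T^k has two elements.
   When nu(q) = w (x) x with w in W, the same relations give l_m = mu^(sgn w_m) for a single
   unit mu wherever w_m <> 0.  The half angles th_m/2 increase in [0, pi), so the sinusoid w
   changes sign at most once and vanishes at most once.  For l in G_S, Abel summation turns
   the relations prod_m l_m^(v_m) = 1 into relations whose determinant is twice a determinant
   of consecutive u_i, which is nonzero; hence mu and the value of l at the zero of w are
   roots of unity of bounded order.  Otherwise the stabilizer in G_S lies in the one in T^k. *)

From HB Require Import structures.
From mathcomp Require Import all_boot all_order all_algebra.
From mathcomp Require Import all_classical all_reals.
From mathcomp Require Import trigo complex.
From mathcomp Require Import ring lra zify.
Import Order.TTheory GRing.Theory Num.Theory.
Set Implicit Arguments.
Unset Strict Implicit.
Unset Printing Implicit Defensive.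
Local Open Scope ring_scope.

Section Quaternions.
Variable R : realType.
Implicit Types (h p : quat R) (l : R[i]).

Definition qnorm2 p : R := csq p.1 + csq p.2.

Definition nuq p (c : nat) : R :=
  let w := Complex 0 2 * p.1 * p.2 in [:: csq p.1 - csq p.2; complex.Re w; complex.Im w]`_c.

(* The imaginary part of h, in the coordinates of [nuq]. *)
Definition qim h (c : nat) : R := [:: complex.Im h.1; - complex.Re h.2; - complex.Im h.2]`_c.

Lemma nuE k (q : 'I_k -> quat R) m (c : 'I_3) : nu q m c = nuq (q m) c.
Proof. by rewrite mxE. Qed.

Lemma qnorm2_ge0 p : 0 <= qnorm2 p.
Proof. rewrite /qnorm2 /csq; nra. Qed.

Lemma qnorm2_eq0 p : qnorm2 p = 0 -> p = qzero R.
Proof.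
case: p => [[a b] [c d]]; rewrite /qnorm2 /csq /= => h.
have [-> ->] : a = 0 /\ b = 0 by split; nra.
by have [-> ->] : c = 0 /\ d = 0 by split; nra.
Qed.

Lemma nuq_norm p : nuq p 0 ^+ 2 + nuq p 1 ^+ 2 + nuq p 2 ^+ 2 = qnorm2 p ^+ 2.
Proof. by case: p => [[x1 x2] [y1 y2]]; rewrite /qnorm2 /nuq /csq /=; ring. Qed.

Lemma nuq_eq0 p : (forall c : 'I_3, nuq p c = 0) <-> qnorm2 p = 0.
Proof.
have E := nuq_norm p; split => [H|p0].
  apply/eqP; rewrite -sqrf_eq0 -E (H ord0).
  by rewrite (H (Ordinal (isT : (1 < 3)%N))) (H (Ordinal (isT : (2 < 3)%N))); apply/eqP; ring.
rewrite p0 in E.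
have [n0 n1 n2] : [/\ nuq p 0 = 0, nuq p 1 = 0 & nuq p 2 = 0] by split; nra.
by case=> [[|[|[|c]]] Hc].
Qed.

(* Both identities come from h |p|^2 = h p p^* = p l p^*. *)
Lemma qmul_stab h p l : qmul p (l, 0) = qmul h p ->
  complex.Re l * qnorm2 p = complex.Re h.1 * qnorm2 p
  /\ forall c : 'I_3, complex.Im l * nuq p c = qim h c * qnorm2 p.
Proof.
case: h p => [h1 h2] [x y]; rewrite /qmul => -[E1 E2].
have D1 : h1 * x - h2 * conjc y - x * l = 0 by rewrite -E1 oppr0 mulr0 subr0 subrr.
have D2 : h1 * y + h2 * conjc x - y * conjc l = 0 by rewrite -E2 mulr0 add0r subrr.
have K1 : h1 * (x * conjc x + y * conjc y) = l * x * conjc x + conjc l * y * conjc y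
   + (h1 * x - h2 * conjc y - x * l) * conjc x + (h1 * y + h2 * conjc x - y * conjc l) * conjc y.
  by ring.
have K2 : h2 * (x * conjc x + y * conjc y) = x * y * (conjc l - l)
   - (h1 * x - h2 * conjc y - x * l) * y + (h1 * y + h2 * conjc x - y * conjc l) * x.
  by ring.
rewrite D1 D2 !mul0r !addr0 subr0 in K1 K2; move: K1 K2; clear.
case: h1 h2 x y l => [a1 b1] [a2 b2] [x1 x2] [y1 y2] [l1 l2].
rewrite /qnorm2 /nuq /qim /csq /= => -[K1 K1'] [K2 K2'].
by split; [lra | case=> [[|[|[|c]]] Hc] //=; lra].
Qed.

(* Left multiplication by h acts on nu by |h|^2 times a rotation of Im H. *)
Definition qrot h : 'M[R]_3 := \matrix_(i < 3, j < 3)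
  (let a := complex.Re h.1 in let b := complex.Im h.1 in
   let c := complex.Re h.2 in let d := complex.Im h.2 in
   nth 0 (nth [::]
     [:: [:: a^+2 + b^+2 - c^+2 - d^+2; - 2 * (b * c - a * d); - 2 * (b * d + a * c)];
         [:: - 2 * (b * c + a * d); a^+2 - b^+2 + c^+2 - d^+2; 2 * (c * d - a * b)];
         [:: - 2 * (b * d - a * c); 2 * (c * d + a * b); a^+2 - b^+2 - c^+2 + d^+2]] j) i).

Lemma nu_qmul k h (q : 'I_k -> quat R) : nu (fun m => qmul h (q m)) = nu q *m qrot h.
Proof.
apply/matrixP => m c; rewrite !mxE !big_ord_recr big_ord0 /= add0r !mxE.
by case: c => [[|[|[|c]]] Hc] //=; case: h (q m) => [[a b] [c d]] [[x1 x2] [y1 y2]];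
  rewrite /csq /=; ring.
Qed.

End Quaternions.

Section MomentMap.
Variables (R : realType) (k : nat) (th : 'I_k -> R) (B : 'M[R]_(k, k - 2)).

Lemma muR_inRset q : inRset B q -> muR B q = 0.
Proof.
move=> [_ [q' [[_ mu0] [h [_ Hh]]]]].
have -> : q = (fun m => qmul h (q' m)) by apply: boolp.funext => m; rewrite Hh.
by rewrite /muR nu_qmul trmx_mul -mulmxA -/(muR B q') mu0 mulmx0.
Qed.

Hypothesis hB : forall w : 'rV[R]_k, w *m B = 0 <-> inW th w.

Lemma nu_col_inW q : muR B q = 0 -> forall c : 'I_3, exists a b : R,
  forall m, nu q m c = a * cos (th m / 2) + b * sin (th m / 2).
Proof.
move=> mu0 c.
have : (\row_m nu q m c) *m B = 0.
  have := congr1 (row c) mu0; rewrite /muR row_mul row0 => <-.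
  by congr (_ *m _); apply/rowP => m; rewrite !mxE.
move/hB => [a [b hw]]; exists a, b => m.
by have := congr1 (fun M : 'rV[R]_k => M 0 m) hw; rewrite !mxE.
Qed.

Definition nu_decomposable q :=
  exists (w : 'rV[R]_k) (x : 'rV[R]_3), inW th w /\ nu q = w^T *m x.

Lemma nu_indep_of_nondecomposable q (A Bv : 'I_3 -> R) :
  (forall m c, nu q m c = A c * cos (th m / 2) + Bv c * sin (th m / 2)) ->
  ~ nu_decomposable q ->
  forall p r : R, (forall c, p * A c + r * Bv c = 0) -> p = 0 /\ r = 0.
Proof.
move=> nuE' nd p r H; apply: boolp.contrapT => pr_neq0; apply: nd.
have [r0|rn] := eqVneq r 0.
  have p0 : p != 0 by apply/eqP => p0; apply: pr_neq0.
  have A0 c : A c = 0.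
    by apply/eqP; have := H c; rewrite r0 mul0r addr0 => /eqP; rewrite mulf_eq0 (negbTE p0).
  exists (\row_i complex.Im (zS th i)), (\row_c Bv c); split.
    by exists 0, 1; rewrite scale0r scale1r add0r.
  by apply/matrixP => m c; rewrite nuE' A0 [RHS]mxE big_ord1 !mxE /=; ring.
exists (\row_i complex.Re (zS th i) - (p / r) *: \row_i complex.Im (zS th i)), (\row_c A c).
split; first by exists 1, (- (p / r)); rewrite scale1r scaleNr.
apply/matrixP => m c; rewrite nuE' [RHS]mxE big_ord1 !mxE /=.
have -> : Bv c = - (p / r) * A c.
  apply: (mulfI rn); rewrite (_ : r * Bv c = - (p * A c)); first by field.
  by apply/eqP; rewrite -addr_eq0 addrC H.
ring.
Qed.

End MomentMap.

Section TorusStabilizer.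
Variables (R : realType) (k : nat) (q : 'I_k -> quat R) (A Bv : 'I_3 -> R) (C S : 'I_k -> R).
Variables (i0 i1 : 'I_k).
Hypotheses (nuqE : forall m (c : 'I_3), nuq (q m) c = A c * C m + Bv c * S m)
  (CS1 : forall m, C m ^+ 2 + S m ^+ 2 = 1)
  (C0 : C i0 = 1) (S0 : S i0 = 0) (S1 : 0 < S i1)
  (AB_indep : forall p r : R, (forall c, p * A c + r * Bv c = 0) -> p = 0 /\ r = 0).

Let qnorm2_neq0 m : qnorm2 (q m) != 0.
Proof.
apply/eqP => /nuq_eq0 nuq0.
have [|Cm Sm] := @AB_indep (C m) (S m).
  by move=> c; rewrite -(nuq0 c) nuqE; ring.
by have := CS1 m; rewrite Cm Sm; lra.
Qed.

Lemma stab_Im_eq0 l h : (forall m, qmul (q m) (l m, 0) = qmul h (q m)) ->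
  forall m, complex.Im (l m) = 0.
Proof.
move=> Hh; have Im_eq m := (qmul_stab (Hh m)).2.
set n0 := qnorm2 (q i0); set n1 := qnorm2 (q i1).
set s0 := complex.Im (l i0); set s1 := complex.Im (l i1).
have [s0n1 s1n0S] : s0 * n1 - s1 * n0 * C i1 = 0 /\ - (s1 * n0 * S i1) = 0.
  apply: AB_indep => c; have := Im_eq i0 c; have := Im_eq i1 c.
  rewrite !nuqE C0 S0 -/n0 -/n1 -/s0 -/s1 => e1 e0.
  have := congr1 ( *%R^~ n1) e0; have := congr1 ( *%R^~ n0) e1 => /= e1' e0'; lra.
have s1_0 : s1 = 0.
  apply/eqP; move/eqP: s1n0S.
  by rewrite oppr_eq0 !mulf_eq0 (negbTE (qnorm2_neq0 i0)) (gt_eqF S1) !orbF.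
have s0_0 : s0 = 0.
  by apply/eqP; move/eqP: s0n1; rewrite s1_0 !mul0r subr0 mulf_eq0 (negbTE (qnorm2_neq0 i1)) orbF.
have qim0 (c : 'I_3) : qim h c = 0.
  apply/eqP; have := Im_eq i0 c; rewrite -/s0 s0_0 mul0r => /esym/eqP.
  by rewrite mulf_eq0 (negbTE (qnorm2_neq0 i0)) orbF.
move=> m; apply/eqP/negPn/negP => sm.
have/eqP := qnorm2_neq0 m; apply; apply/nuq_eq0 => c.
by apply/eqP; have := Im_eq m c; rewrite qim0 mul0r => /eqP; rewrite mulf_eq0 (negbTE sm).
Qed.

Lemma stabT_sign l : stabT q l -> l = (fun=> Complex 1 0) \/ l = (fun=> Complex (-1) 0).
Proof.
move=> [Tl [h [_ Hh]]]; have Im0 := stab_Im_eq0 Hh.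
have Re_eq m : complex.Re (l m) = complex.Re h.1.
  by apply: (mulIf (qnorm2_neq0 m)); exact: (qmul_stab (Hh m)).1.
have lE m : l m = Complex (complex.Re h.1) 0 by rewrite -(Re_eq m) -(Im0 m); case: (l m).
have : complex.Re h.1 ^+ 2 = 1 by have := Tl i0; rewrite lE /csq /= expr0n addr0.
move/eqP; rewrite sqrf_eq1 => /orP[] /eqP g1; [left | right];
  by apply: boolp.funext => m; rewrite lE g1.
Qed.

End TorusStabilizer.

Section ConformalAngles.
Variables (R : realType) (k : nat) (th : 'I_k -> R).
Hypothesis hz : conformal_data th.

Lemma conformal_lt (i j : 'I_k) : (i < j)%N -> th i < th j.
Proof.
have [_ [_ incr]] := hz.
have step (a b : 'I_k) : b = a.+1 :> nat -> th a < th b.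
  move=> ab; have ak : (a.+1 < k)%N by move: (ltn_ord b); lia.
  have -> : b = ordS a by apply: val_inj => /=; rewrite modn_small // -ab.
  exact: incr.
suff H n (j' : 'I_k) : j' = (i + n.+1)%N :> nat -> th i < th j'.
  by move=> ij; apply: (H (j - i.+1)%N); lia.
elim: n j' => [|n IH] j' ij; first by apply: step; lia.
have jk : (i + n.+1 < k)%N by move: (ltn_ord j'); lia.
by apply: (lt_trans (IH (Ordinal jk) erefl)); apply: step => /=; lia.
Qed.

Lemma conformal_half_bounds m : 0 <= th m / 2 < pi.
Proof. by have [/(_ m)/andP[? ?] _] := hz; apply/andP; split; lra. Qed.

Lemma sinusoid_between (al be : R) (i j l : 'I_k) : (i < j)%N -> (j < l)%N ->
  let f m := al * cos (th m / 2) + be * sin (th m / 2) in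
  exists p r : R, [/\ 0 < p, 0 < r & f j = p * f i + r * f l].
Proof.
move=> ij jl f; have tij := conformal_lt ij; have tjl := conformal_lt jl.
have /andP[ai bi] := conformal_half_bounds i; have /andP[aj bj] := conformal_half_bounds j.
have /andP[al' bl] := conformal_half_bounds l.
rewrite /f; set a := th i / 2 in ai bi *; set b := th j / 2 in aj bj *.
set c := th l / 2 in al' bl *.
have ab : a < b by rewrite /a /b; lra.
have bc : b < c by rewrite /b /c; lra.
have s1 : 0 < sin (c - b) by apply: sin_gt0_pi; apply/andP; split; lra.
have s2 : 0 < sin (b - a) by apply: sin_gt0_pi; apply/andP; split; lra.
have s3 : 0 < sin (c - a) by apply: sin_gt0_pi; apply/andP; split; lra.
have id : (al * cos b + be * sin b) * sin (c - a) =
    (al * cos a + be * sin a) * sin (c - b) + (al * cos c + be * sin c) * sin (b - a).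
  by rewrite !sinB; ring.
exists (sin (c - b) / sin (c - a)), (sin (b - a) / sin (c - a)); split; try exact: divr_gt0.
by rewrite -[LHS](mulfK (lt0r_neq0 s3)) id; field; exact: lt0r_neq0 s3.
Qed.

End ConformalAngles.

Lemma stabT_finite (R : realType) k (th : 'I_k -> R) (B : 'M[R]_(k, k - 2)) :
  conformal_data th -> (forall w : 'rV[R]_k, w *m B = 0 <-> inW th w) -> (1 < k)%N ->
  forall q, inRset B q -> ~ nu_decomposable th q -> finite_set (stabT q).
Proof.
move=> hz hB k1 q qR nd.
have k0 : (0 < k)%N by lia.
pose i0 : 'I_k := Ordinal k0; pose i1 : 'I_k := Ordinal k1.
have cw c : exists ab : R * R,
    forall m, nu q m c = ab.1 * cos (th m / 2) + ab.2 * sin (th m / 2).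
  by have [a [b E]] := nu_col_inW hB (muR_inRset qR) c; exists (a, b).
have [ab abE] := boolp.choice cw.
pose A c := (ab c).1; pose Bv c := (ab c).2.
have indep := @nu_indep_of_nondecomposable _ _ _ q A Bv (fun m c => abE c m) nd.
have nuqE m (c : 'I_3) : nuq (q m) c = A c * cos (th m / 2) + Bv c * sin (th m / 2).
  by rewrite -nuE abE.
have th0 : th i0 = 0 by have [_ [H _]] := hz; exact: H.
have C0 : cos (th i0 / 2) = 1 by rewrite th0 mul0r cos0.
have S0 : sin (th i0 / 2) = 0 by rewrite th0 mul0r sin0.
have S1 : 0 < sin (th i1 / 2).
  apply: sin_gt0_pi; have := conformal_lt hz (isT : (i0 < i1)%N); rewrite th0 => ?.
  by have /andP[_ ?] := conformal_half_bounds hz i1; apply/andP; split; lra.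
apply: (@sub_finite_set _ _ [set fun=> Complex 1 0; fun=> Complex (-1) 0]); last exact: finite_set2.
by move=> l /(stabT_sign nuqE (fun m => cos2Dsin2 _) C0 S0 S1 indep) [] ->; [left | right].
Qed.

Lemma sgz_pm (R : realDomainType) (x : R) : x != 0 -> sgz x = 1 \/ sgz x = -1.
Proof.
move=> x0; have [/ltr0_sgz|/gtr0_sgz|x_0] := ltrgtP x 0; [by right | by left |].
by rewrite x_0 eqxx in x0.
Qed.

Lemma intr_sgz_sqr (R : realDomainType) (x : R) : x != 0 -> (sgz x)%:~R ^+ 2 = 1 :> R.
Proof. by case/sgz_pm => ->; rewrite ?intrN ?sqrrN expr1n. Qed.

Section SignPattern.
Variables (R : realDomainType) (k : nat) (g : 'I_k -> R).
Hypothesis between : forall i j l : 'I_k, (i < j)%N -> (j < l)%N ->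
  exists p r : R, [/\ 0 < p, 0 < r & g j = p * g i + r * g l].

Lemma sgz_between (i j l : 'I_k) : (i < j)%N -> (j < l)%N ->
  sgz (g l) = sgz (g i) -> sgz (g j) = sgz (g i).
Proof.
move=> ij jl eil; have [p [r [p0 r0 ->]]] := between ij jl.
have [gi|gi|gi] := ltrgtP (g i) 0.
- have gl : g l < 0 by rewrite -sgz_lt0 eil sgz_lt0.
  by rewrite !ltr0_sgz //; nra.
- have gl : 0 < g l by rewrite -sgz_gt0 eil sgz_gt0.
  by rewrite !gtr0_sgz //; nra.
- have /eqP gl : g l == 0 by rewrite -sgz_eq0 eil gi sgz0.
  by rewrite gi gl !mulr0 addr0.
Qed.

Lemma sgz_zero_between (i j l : 'I_k) : (i < j)%N -> (j < l)%N ->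
  g j = 0 -> sgz (g l) = - sgz (g i).
Proof.
move=> ij jl; have [p [r [p0 r0 ->]]] := between ij jl.
move=> /eqP; rewrite addr_eq0 => /eqP /(congr1 (@sgz _)).
by rewrite sgzN !sgzM (gtr0_sgz p0) (gtr0_sgz r0) !mul1r => ->; rewrite opprK.
Qed.

Lemma sgz_zero_left (i j l : 'I_k) : (i < j)%N -> (j < l)%N ->
  g i = 0 -> sgz (g j) = sgz (g l).
Proof.
move=> ij jl gi; have [p [r [p0 r0 ->]]] := between ij jl.
by rewrite gi mulr0 add0r sgzM (gtr0_sgz r0) mul1r.
Qed.

Lemma sgz_zero_right (i j l : 'I_k) : (i < j)%N -> (j < l)%N ->
  g l = 0 -> sgz (g j) = sgz (g i).
Proof.
move=> ij jl gl; have [p [r [p0 r0 ->]]] := between ij jl.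
by rewrite gl mulr0 addr0 sgzM (gtr0_sgz p0) mul1r.
Qed.

Lemma sgz_sides (m0 : 'I_k) : g m0 = 0 -> forall m n : 'I_k, m != m0 -> n != m0 ->
  sgz (g m) = (if (m < m0)%N == (n < m0)%N then 1 else -1) * sgz (g n).
Proof.
move=> g0; suff H (m n : 'I_k) : (m < n)%N -> m != m0 -> n != m0 ->
    sgz (g m) = (if (m < m0)%N == (n < m0)%N then 1 else -1) * sgz (g n).
  move=> m n mm0 nm0; have [mn|nm|/val_inj->] := ltngtP m n; first exact: H.
    by rewrite (H _ _ nm nm0 mm0) mulrA eq_sym; case: ifP; rewrite ?mulN1r ?opprK ?mul1r.
  by rewrite eqxx mul1r.
move=> mn mm0 nm0; have [m0m|mm0'|/val_inj eq] := ltngtP m0 m; last by rewrite eq eqxx in mm0.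
  have -> : (n < m0)%N = false by lia.
  by rewrite mul1r (sgz_zero_left m0m mn g0).
have [nm0'|m0n|/val_inj eq] := ltngtP n m0; last by rewrite eq eqxx in nm0.
  by rewrite mul1r (sgz_zero_right mn nm0' g0).
by rewrite mulN1r (sgz_zero_between mm0' m0n g0) opprK.
Qed.

Hypothesis g_neq0 : exists n, g n != 0.

Lemma sign_pattern_zero (m0 : 'I_k) : g m0 = 0 -> exists2 e : int, (e = 1 \/ e = -1) &
  forall m, sgz (g m) = if (m < m0)%N then e else if m == m0 then 0 else - e.
Proof.
move=> g0; have [n gn] := g_neq0.
have nm0 : n != m0 by apply: contraNneq gn => ->; rewrite g0.
exists ((if (n < m0)%N then 1 else -1) * sgz (g n)).
  by case: (sgz_pm gn) => ->; case: ifP; rewrite ?mul1r ?mulN1r; [left|right|right|left].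
move=> m; have [->|mm0] := eqVneq m m0; first by rewrite ltnn g0 sgz0.
rewrite (sgz_sides g0 mm0 nm0).
by case: (m < m0)%N; case: (n < m0)%N; rewrite /= ?mul1r ?mulN1r ?opprK.
Qed.

Lemma sign_pattern_nozero : (forall m, g m != 0) ->
  exists e (j : 'I_k), (e = 1 \/ e = -1) /\ forall m, sgz (g m) = if (m <= j)%N then e else - e.
Proof.
move=> gnz; have [n _] := g_neq0; have k0 : (0 < k)%N by apply: leq_ltn_trans (ltn_ord n).
pose i0 : 'I_k := Ordinal k0; set e := sgz (g i0).
have [j /eqP ej jmax] := @arg_maxnP _ i0 (fun j => sgz (g j) == e) (fun j => nat_of_ord j) (eqxx _).
exists e, j; split; first exact: sgz_pm.
move=> m; case: leqP => [mj|jm].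
  have [m0|mpos] := posnP m; first by have -> : m = i0 by apply: val_inj.
  move: mj; rewrite leq_eqVlt => /orP[/eqP/val_inj->|mj] //.
  exact: (sgz_between (i := i0) mpos mj ej).
have me : sgz (g m) != e by apply: contraTneq jm => /eqP/jmax; rewrite -leqNgt.
move: me; rewrite /e; case: (sgz_pm (gnz m)) => ->; case: (sgz_pm (gnz i0)) => -> //.
Qed.

End SignPattern.

Definition pcoord (a : bool) (x : int * int) : int := if a then x.1 else x.2.

Section CyclicSums.
Variable k : nat.
Implicit Types (m j : 'I_k) (eps : 'I_k -> int).

Lemma ordS_val m : ordS m = (if m == k.-1 :> nat then 0 else m.+1)%N :> nat.
Proof.
rewrite /=; have := ltn_ord m; case: eqP => mk km.
  by rewrite (_ : m.+1 = k) ?modnn //; lia.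
by rewrite modn_small //; lia.
Qed.

Lemma ord_pred_val m : ord_pred m = (if m == 0 :> nat then k.-1 else m.-1)%N :> nat.
Proof.
rewrite /=; have := ltn_ord m; case: eqP => [->|m0] km.
  by rewrite add0n modn_small //; lia.
have -> : (m + k).-1 = m.-1 + k by lia.
by rewrite modnDr modn_small //; lia.
Qed.

(* Abel summation against v_i = u_i - u_{i-1}; the sign twist at [k.-1] comes from
   v_1 = u_1 + u_k. *)
Definition sgn_jump eps m : int := eps m + (if m == k.-1 :> nat then 1 else -1) * eps (ordS m).

Lemma vS_pcoord (u : 'I_k -> int * int) a m :
  pcoord a (vS u m) = pcoord a (u m) + (if val m == 0%N then 1 else -1) * pcoord a (u (ord_pred m)).
Proof. by rewrite /pcoord /vS; case: (val m == 0%N); case: a => /=; ring. Qed.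

Lemma sum_vS_by_parts (u : 'I_k -> int * int) eps a :
  \sum_m eps m * pcoord a (vS u m) = \sum_m sgn_jump eps m * pcoord a (u m).
Proof.
under eq_bigr => m _ do rewrite vS_pcoord mulrDr.
rewrite big_split /= [X in _ + X](reindex_inj (@ordS_inj k)) -big_split.
apply: eq_bigr => m _; rewrite ordSK ordS_val /sgn_jump.
by case: (m == k.-1 :> nat) => /=; ring.
Qed.

Lemma sum_if_eq j (x : int) (F : 'I_k -> int) :
  \sum_m (if m == j then x else 0) * F m = x * F j.
Proof. by rewrite (bigD1 j) //= eqxx big1 ?addr0 // => m /negbTE ->; rewrite mul0r. Qed.

Lemma sgn_jump_nozero eps e j : (forall m, eps m = if (m <= j)%N then e else - e) ->
  forall m, sgn_jump eps m = if m == j then 2 * e else 0.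
Proof.
move=> epsE m; rewrite /sgn_jump !epsE ordS_val -val_eqE /=.
move: (ltn_ord m) (ltn_ord j) => mk jk.
by case: ifP => mk'; repeat case: ifP => ?; rewrite ?mul1r ?mulN1r ?opprK; lia.
Qed.

Lemma sgn_jump_zero eps e (m0 : 'I_k) : (1 < k)%N ->
  (forall m, eps m = if (m < m0)%N then e else if m == m0 then 0 else - e) ->
  forall m, sgn_jump eps m = (if m == ord_pred m0 then (if val m0 == 0%N then - e else e) else 0)
                             + (if m == m0 then e else 0).
Proof.
move=> k1 epsE m; have := ordS_val m; have := ord_pred_val m0; rewrite /= => predE succE.
rewrite /sgn_jump !epsE -!val_eqE /= predE succE.
move: (ltn_ord m) (ltn_ord m0) => mk m0k.
have [m00|m0pos] := posnP m0; rewrite ?m00 ?(gtn_eqF m0pos) /=;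
  by case: ifP => mk'; repeat case: ifP => ?; rewrite ?mul1r ?mulN1r ?opprK; lia.
Qed.

End CyclicSums.

Section ComplexExp.
Variable R : realType.
Implicit Types a b : R.

Lemma expcD a b : expc (a + b) = expc a * expc b.
Proof. by rewrite /expc sinD cosD; congr (Complex _ _); ring. Qed.

Lemma expc0 : expc (0 : R) = 1.
Proof. by rewrite /expc cos0 sin0. Qed.

Lemma expcN a : expc (- a) = (expc a)^-1.
Proof. by apply/esym/mulr1_eq; rewrite -expcD subrr expc0. Qed.

Lemma csq_expc a : csq (expc a) = 1.
Proof. by rewrite /csq /= cos2Dsin2. Qed.

Lemma expc_neq0 a : expc a != 0.
Proof.
by apply: contra_eq_neq (csq_expc a) => ->; rewrite /csq /= expr0n addr0 eq_sym oner_neq0.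
Qed.

Lemma expc_intrM (n : int) a : expc (n%:~R * a) = expc a ^ n.
Proof.
have expc_natM (m : nat) : expc (m%:R * a) = expc a ^+ m.
  elim: m => [|m IH]; first by rewrite mul0r expc0.
  by rewrite exprSr -addn1 natrD mulrDl mul1r expcD IH.
case: n => n; first exact: expc_natM.
by rewrite NegzE mulrNz mulNr expcN expc_natM.
Qed.

Lemma expc_sum k (F : 'I_k -> R) : expc (\sum_i F i) = \prod_i expc (F i).
Proof. exact: (big_morph _ expcD expc0). Qed.

End ComplexExp.

Lemma inGS_inTk (R : realType) k (u : 'I_k -> int * int) (l : 'I_k -> R[i]) :
  inGS u l -> inTk l.
Proof. by move=> [t [_ lE]] m; rewrite lE csq_expc. Qed.

Lemma inGS_prod (R : realType) k (u : 'I_k -> int * int) (l : 'I_k -> R[i]) :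
  inGS u l -> forall a, \prod_m l m ^ pcoord a (vS u m) = 1.
Proof.
move=> [t [tg lE]] a; pose c : 'I_2 := if a then ord0 else ord_max.
have : (t *m Omega R u) 0 c = 0 by rewrite tg mxE.
rewrite mxE => sum0; rewrite -[RHS](expc0 R) -sum0 expc_sum; apply: eq_bigr => m _.
by rewrite lE mxE /c /pcoord mulrC; clear; case: a; rewrite /= expc_intrM.
Qed.

Lemma finite_roots_of_unity (F : closedFieldType) (N : nat) : (0 < N)%N ->
  finite_set [set z : F | z ^+ N = 1].
Proof.
move=> N0; have [r rE] := closed_field_poly_normal ('X^N - 1%:P : {poly F}).
apply: (@sub_finite_set _ _ [set` r]); last by apply/finite_seqP; exists r.
move=> z /= zN; have : root ('X^N - 1%:P) z by rewrite rootE !hornerE zN subrr.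
by rewrite rE lead_coefXnsubC // scale1r root_prod_XsubC.
Qed.

Section IntegerPowers.
Variable F : fieldType.
Implicit Types x y : F.

Lemma expfz_eq1_norm x (n : int) : x != 0 -> x ^ n = 1 -> x ^+ `|n|%N = 1.
Proof. by move=> x0; case: n => n //= /eqP; rewrite invr_eq1 => /eqP. Qed.

Lemma expfz_elim x y (a b c : int) : x != 0 ->
  x ^ a * y ^ b = 1 -> x ^ c * y ^ b = 1 -> x ^ (a - c) = 1.
Proof.
move=> x0 eq_a eq_c; have xa : x ^ a = (y ^ b)^-1 by apply/esym/mulr1_eq; rewrite mulrC.
have xc : x ^ c = (y ^ b)^-1 by apply/esym/mulr1_eq; rewrite mulrC.
by rewrite expfzDr // -invr_expz xa -xc mulfV // expfz_neq0.
Qed.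

Lemma expfz_cramer x y (a0 b0 a1 b1 : int) : x != 0 -> y != 0 ->
  x ^ a0 * y ^ b0 = 1 -> x ^ a1 * y ^ b1 = 1 ->
  x ^ (a0 * b1 - a1 * b0) = 1 /\ y ^ (a0 * b1 - a1 * b0) = 1.
Proof.
move=> x0 y0 e0 e1.
have powM (a b c : int) : x ^ a * y ^ b = 1 -> x ^ (a * c) * y ^ (b * c) = 1.
  by move=> e; rewrite -!exprz_exp -expfzMl e exp1rz.
split.
  apply: (expfz_elim x0 (powM _ _ b1 e0)); rewrite [b0 * b1]mulrC; exact: powM.
rewrite (_ : _ - _ = b1 * a0 - b0 * a1); last by ring.
apply: (expfz_elim y0 (b := a1 * a0)); rewrite mulrC; first exact: powM.
by rewrite [a1 * a0]mulrC powM.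
Qed.

Lemma prod_expfz (I : finType) (P : pred I) x (e : I -> int) : x != 0 ->
  \prod_(i | P i) x ^ e i = x ^ (\sum_(i | P i) e i).
Proof. by move=> x0; rewrite (big_morph _ (fun a b => @expfzDr _ x a b x0) (expr0z x)). Qed.

End IntegerPowers.

Section RankOneStabilizer.
Variables (R : realType) (k : nat) (q : 'I_k -> quat R) (f : 'I_k -> R) (X : 'I_3 -> R).
Hypotheses (nuqE : forall m (c : 'I_3), nuq (q m) c = f m * X c)
  (q_neq0 : exists m, qnorm2 (q m) != 0).

Lemma stab_rank1 l h : inTk l -> (forall m, qmul (q m) (l m, 0) = qmul h (q m)) ->
  exists g s : R, g ^+ 2 + s ^+ 2 = 1 /\
    forall m, f m != 0 -> l m = Complex g ((sgz (f m))%:~R * s).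
Proof.
move=> Tl Hh; have [m1 qm1] := q_neq0.
have [c1 Xc1] : exists c, X c != 0.
  apply: boolp.contrapT => noX; move/eqP: qm1; apply; apply/nuq_eq0 => c.
  by rewrite nuqE (_ : X c = 0) ?mulr0 //; apply/eqP/negPn/negP => Xc; apply: noX; exists c.
pose o0 : 'I_3 := ord0; pose o1 : 'I_3 := Ordinal (isT : (1 < 3)%N).
pose o2 : 'I_3 := Ordinal (isT : (2 < 3)%N).
pose X2 := X o0 ^+ 2 + X o1 ^+ 2 + X o2 ^+ 2.
pose N := Num.sqrt X2.
have normE m : qnorm2 (q m) = `|f m| * N.
  have sq : qnorm2 (q m) ^+ 2 = f m ^+ 2 * X2.
    by rewrite -nuq_norm (nuqE m o0) (nuqE m o1) (nuqE m o2) /X2; ring.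
  by rewrite -[LHS]ger0_norm ?qnorm2_ge0 // -sqrtr_sqr sq sqrtrM ?sqr_ge0 // sqrtr_sqr.
have [fm1 N0] : f m1 != 0 /\ N != 0.
  by apply/andP; move: qm1; rewrite normE mulf_eq0 negb_or normr_eq0.
pose s := qim h c1 * N / X c1.
have lE m : f m != 0 -> l m = Complex (complex.Re h.1) ((sgz (f m))%:~R * s).
  move=> fm; have nq : qnorm2 (q m) != 0 by rewrite normE mulf_neq0 ?normr_eq0.
  have [ReE ImE] := qmul_stab (Hh m).
  have Re_l : complex.Re (l m) = complex.Re h.1 by apply: (mulIf nq).
  have Im_l : complex.Im (l m) = (sgz (f m))%:~R * s.
    have := ImE c1; rewrite nuqE normE normrEsg sgrEz => E.
    by apply: (mulIf (mulf_neq0 fm Xc1)); rewrite E /s; field.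
  by move: Re_l Im_l; case: (l m) => a b /= -> ->.
exists (complex.Re h.1), s; split; last exact: lE.
by have := Tl m1; rewrite (lE m1 fm1) /csq /= exprMn intr_sgz_sqr // mul1r.
Qed.

Variable u : 'I_k -> int * int.

(* The last conjunct is the defining condition of G_S after Abel summation. *)
Lemma stabGS_rank1 l : stabGS u q l -> exists mu : R[i],
  [/\ mu != 0, forall m, l m != 0, forall m, f m != 0 -> l m = mu ^ sgz (f m) &
   forall a, mu ^ (\sum_m sgn_jump (fun m => sgz (f m)) m * pcoord a (u m))
             * \prod_(m | f m == 0) l m ^ pcoord a (vS u m) = 1].
Proof.
move=> [GSl [h [_ Hh]]]; have [g [s [gs lE]]] := stab_rank1 (inGS_inTk GSl) Hh.
pose mu := Complex g s.
have mm : mu * Complex g (- s) = 1.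
  by apply/eqP; rewrite eq_complex /= -gs; apply/andP; split; apply/eqP; ring.
have mu0 : mu != 0.
  by apply/eqP => mu_0; move: mm; rewrite mu_0 mul0r => /eqP; rewrite eq_sym oner_eq0.
have mu_inv : mu^-1 = Complex g (- s) := mulr1_eq mm.
have lmu m : f m != 0 -> l m = mu ^ sgz (f m).
  move=> fm; rewrite lE //; case: (sgz_pm fm) => ->;
  by rewrite ?expr1z ?exprN1 ?mu_inv ?intrN ?mulN1r ?mul1r.
have l0 m : l m != 0 by have [t [_ ->]] := GSl; exact: expc_neq0.
exists mu; split => // a.
rewrite -(sum_vS_by_parts u (fun m => sgz (f m))) -[RHS](inGS_prod GSl a).
rewrite [RHS](bigID (fun m => f m == 0)) /= mulrC; congr (_ * _).
rewrite (bigID (fun m => f m == 0)) /= big1 ?add0r => [|m /eqP ->]; last by rewrite sgz0 mul0r.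
by rewrite -prod_expfz //; apply: eq_bigr => m fm; rewrite lmu // exprz_exp.
Qed.

Lemma finite_stabGS_of_roots (N : nat) : (0 < N)%N ->
  (forall l, stabGS u q l -> exists mu rho : R[i],
     [/\ mu ^+ N = 1, rho ^+ N = 1 & l = fun m => if f m == 0 then rho else mu ^ sgz (f m)]) ->
  finite_set (stabGS u q).
Proof.
move=> N0 param; have rootsN := finite_roots_of_unity R[i] N0.
pose of_roots (mu rho : R[i]) (m : 'I_k) := if f m == 0 then rho else mu ^ sgz (f m).
apply: (sub_finite_set _ (finite_image2 of_roots rootsN rootsN)).
by move=> l /param [mu [rho [mu1 rho1 ->]]]; exists mu => //; exists rho.
Qed.

Hypothesis u_indep : forall i : 'I_k, det2 (u i) (u (ordS i)) != 0.

Lemma stabGS_finite_nozero e (j : 'I_k) : e = 1 \/ e = -1 -> (forall m, f m != 0) ->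
  (forall m, sgz (f m) = if (m <= j)%N then e else - e) -> finite_set (stabGS u q).
Proof.
move=> he fnz sgzE.
have [a uj] : exists a, pcoord a (u j) != 0.
  apply: boolp.contrapT => u0; move: (u_indep j); rewrite /det2.
  have [-> ->] : (u j).1 = 0 /\ (u j).2 = 0.
    by split; apply/eqP/negPn/negP => ?; apply: u0; [exists true | exists false].
  by rewrite !mul0r subrr eqxx.
pose D := 2 * e * pcoord a (u j).
have D0 : D != 0 by rewrite mulf_neq0 // mulf_neq0 //; case: he => ->.
apply: (finite_stabGS_of_roots (N := `|D|%N)); first by rewrite absz_gt0.
move=> l /stabGS_rank1 [mu [mu0 _ lmu rel]].
have muD : mu ^ D = 1.
  have := rel a; rewrite big_pred0 => [|m]; last exact/negbTE/fnz.
  by under eq_bigr => m _ do rewrite (sgn_jump_nozero sgzE); rewrite sum_if_eq mulr1.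
exists mu, 1; split; [exact: expfz_eq1_norm | exact: expr1n |].
by apply: boolp.funext => m; rewrite (negbTE (fnz m)) lmu.
Qed.

Lemma stabGS_finite_zero (m0 : 'I_k) e : (1 < k)%N -> e = 1 \/ e = -1 ->
  (forall m, sgz (f m) = if (m < m0)%N then e else if m == m0 then 0 else - e) ->
  finite_set (stabGS u q).
Proof.
move=> k1 he sgzE.
have f0 m : (f m == 0) = (m == m0).
  rewrite -sgz_eq0 sgzE; have [->|mm0] := eqVneq m m0; first by rewrite ltnn eqxx.
  by case: ifP => _; case: he => ->.
pose P := ord_pred m0.
pose A a := (if val m0 == 0%N then - e else e) * pcoord a (u P) + e * pcoord a (u m0).
pose b a := pcoord a (vS u m0).
pose D := A true * b false - A false * b true.
have D0 : D != 0.
  have -> : D = - 2 * e * (if val m0 == 0%N then 1 else -1) * det2 (u P) (u m0).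
    by rewrite /D /A /b !vS_pcoord /det2 /pcoord; case: (val m0 == 0%N); ring.
  have e0 : e != 0 by case: he => ->.
  have sign0 : (if val m0 == 0%N then 1 else -1) != 0 :> int by case: ifP.
  have det0 : det2 (u P) (u m0) != 0 by have := u_indep P; rewrite /P ord_predK.
  by rewrite mulf_neq0 // mulf_neq0 // mulf_neq0.
apply: (finite_stabGS_of_roots (N := `|D|%N)); first by rewrite absz_gt0.
move=> l /stabGS_rank1 [mu [mu0 l0 lmu rel]].
have relA a : mu ^ A a * l m0 ^ b a = 1.
  have := rel a; rewrite (eq_bigl _ _ f0) big_pred1_eq.
  under eq_bigr => m _ do rewrite (sgn_jump_zero k1 sgzE) mulrDl.
  by rewrite big_split /= !sum_if_eq.
have [muD rhoD] := expfz_cramer mu0 (l0 m0) (relA true) (relA false).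
exists mu, (l m0); split; try exact: expfz_eq1_norm.
apply: boolp.funext => m; rewrite f0; have [->|mm0] := eqVneq m m0 => //.
by rewrite lmu // f0.
Qed.

End RankOneStabilizer.

Lemma stabGS_finite_decomposable (R : realType) k (u : 'I_k -> int * int) (th : 'I_k -> R)
  (q : 'I_k -> quat R) : admissible_S u -> conformal_data th -> (1 < k)%N ->
  qvec_nonzero q -> nu_decomposable th q -> finite_set (stabGS u q).
Proof.
move=> [_ [u_indep _]] hz k1 [m1 qm1] [w [x [[al [be wE]] nu_wx]]].
pose f m := w 0 m; pose X (c : 'I_3) := x 0 c.
have nuqE m (c : 'I_3) : nuq (q m) c = f m * X c by rewrite -nuE nu_wx mxE big_ord1 !mxE.
have q_neq0 : exists m, qnorm2 (q m) != 0.
  by exists m1; apply: contra_neq qm1 => /qnorm2_eq0.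
have f_neq0 : exists m, f m != 0.
  exists m1; apply: contra_neq qm1 => f0; apply: qnorm2_eq0; apply/nuq_eq0 => c.
  by rewrite nuqE f0 mul0r.
have between (i j l : 'I_k) : (i < j)%N -> (j < l)%N ->
    exists p r : R, [/\ 0 < p, 0 < r & f j = p * f i + r * f l].
  by move=> ij jl; rewrite /f wE !mxE; exact: sinusoid_between.
have [fnz|/boolp.existsNP [m0 /negP/negPn/eqP f0]] := boolp.pselect (forall m, f m != 0).
  have [e [j [he sgzE]]] := sign_pattern_nozero between f_neq0 fnz.
  exact: (stabGS_finite_nozero nuqE q_neq0 u_indep he fnz sgzE).
have [e he sgzE] := sign_pattern_zero between f_neq0 f0.
exact: (stabGS_finite_zero nuqE q_neq0 u_indep k1 he sgzE).
Qed.

Lemma admissible_k_gt1 k (u : 'I_k -> int * int) : admissible_S u -> (1 < k)%N.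
Proof.
case: k u => [|[|k]] u [gen [u_indep _]] //.
  by have [c] := gen (1, 0); rewrite !big_ord0 => -[].
have := u_indep ord0; rewrite (_ : ordS ord0 = ord0); last exact: val_inj.
by rewrite /det2 mulrC subrr eqxx.
Qed.

Lemma stabGS_sub_stabT (R : realType) k (u : 'I_k -> int * int) (q : 'I_k -> quat R) :
  (stabGS u q `<=` stabT q)%classic.
Proof. by move=> l [/inGS_inTk Tl stab]. Qed.

Theorem mainTheorem5 (R : realType) (k : nat) (u : 'I_k -> int * int) (th : 'I_k -> R)
  (B : 'M[R]_(k, k - 2))
  (hS : admissible_S u) (hz : conformal_data th)
  (hB : forall w : 'rV[R]_k, w *m B = 0 <-> inW th w) :
  (forall q : 'I_k -> quat R, inRset B q ->
     ~ (exists (w : 'rV[R]_k) (x : 'rV[R]_3), inW th w /\ nu q = w^T *m x) ->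
     finite_set (stabT q))
  /\ (forall q : 'I_k -> quat R, inRset B q -> finite_set (stabGS u q)).
Proof.
have k1 := admissible_k_gt1 hS.
have stabT_fin q : inRset B q -> ~ nu_decomposable th q -> finite_set (stabT q).
  exact: (stabT_finite hz hB k1).
split => // q qR.
have [dec|nondec] := boolp.pselect (nu_decomposable th q).
  exact: stabGS_finite_decomposable hS hz k1 qR.1 dec.
exact: sub_finite_set (@stabGS_sub_stabT _ _ u q) (stabT_fin q qR nondec).
Qed.
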